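(* Let $\mathcal V$ be a congruence-modular variety and $A\in\mathcal V$. For all $\alpha,\beta,\theta\in\mathrm{Con}(A)$, in $\mathrm{Con}(A/\theta)$ we have: (1) $(\alpha\vee\theta)/\theta\to(\beta\vee\theta)/\theta=((\alpha\vee\theta)\to(\beta\vee\theta))/\theta=(\alpha\to(\beta\vee\theta))/\theta$; (2) $((\alpha\vee\theta)/\theta)^{\perp}=(\alpha\to\theta)/\theta$.
   Context: For an algebra $M$, $\mathrm{Con}(M)$ is its congruence lattice with bottom $\Delta_M$ and top $\nabla_M=M^2$; $[\cdot,\cdot]_M$ denotes the (term condition, here equal to the modular) commutator on $\mathrm{Con}(M)$: for $\alpha,\beta,\mu\in\mathrm{Con}(M)$, $C(\alpha,\beta;\mu)$ means that for all $n,k$, every $(n+k)$-ary term $t$, all $(a_i,b_i)\in\alpha$ and $(c_j,d_j)\in\beta$: $(t(\bar a,\bar c),t(\bar a,\bar d))\in\mu$ iff $(t(\bar b,\bar c),t(\bar b,\bar d))\in\mu$, and $[\alpha,\beta]_M=\bigcap\{\mu: C(\alpha,\beta;\mu)\}$. For $\theta\in\mathrm{Con}(A)$ and $\gamma\supseteq\theta$, $\gamma/\theta=\{(a/\theta,b/\theta):(a,b)\in\gamma\}\in\mathrm{Con}(A/\theta)$. In any algebra $M$ and for $\beta,\gamma\in\mathrm{Con}(M)$: $\beta\to\gamma=\bigvee\{\alpha\in\mathrm{Con}(M):[\alpha,\beta]_M\subseteq\gamma\}$ and $\beta^\perp=\beta\to\Delta_M$ (computed in $M$; in the claim, $\to$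 and $^\perp$ on the left-hand sides are computed in $A/\theta$, those inside parentheses in $A$). *)

From mathcomp Require Import ssreflect ssrbool eqtype ssrnat fintype.
From Stdlib Require Import ClassicalEpsilon.

Set Implicit Arguments.
Unset Strict Implicit.

Record signature := Signature { sym : Type; arity : sym -> nat }.

Record algebra (s : signature) := Algebra {
  carrier :> Type;
  ops : forall f : sym s, ('I_(arity f) -> carrier) -> carrier }.
Arguments ops {s} _ f _.

Inductive term (s : signature) (X : Type) : Type :=
  | Var : X -> term s X
  | App : forall f : sym s, ('I_(arity f) -> term s X) -> term s X.
Arguments Var {s X} x.
Arguments App {s X} f ts.

Fixpoint eval (s : signature) (M : algebra s) (X : Type) (v : X -> M)
  (t : term s X) : M :=
  match t with
  | Var x => v x
  | App f ts => ops M f (fun i => @eval s M X v (ts i))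
  end.
Arguments eval {s} M {X} v t.

Definition prel (T : Type) := T -> T -> Prop.
Definition subrel (T : Type) (R S : prel T) := forall x y, R x y -> S x y.
Definition releq (T : Type) (R S : prel T) := forall x y, R x y <-> S x y.

Definition is_con (s : signature) (M : algebra s) (R : prel M) : Prop :=
  (forall x, R x x) /\ (forall x y, R x y -> R y x) /\
  (forall x y z, R x y -> R y z -> R x z) /\
  (forall (f : sym s) (a b : 'I_(arity f) -> M),
      (forall i, R (a i) (b i)) -> R (ops M f a) (ops M f b)).

Definition Delta (T : Type) : prel T := fun x y => x = y.
Definition cmeet (T : Type) (R S : prel T) : prel T := fun x y => R x y /\ S x y.
Definition bigjoin (s : signature) (M : algebra s) (P : prel M -> Prop) : prel M :=
  fun x y => forall g : prel M, is_con g -> (forall a, P a -> subrel a g) -> g x y.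
Definition cjoin (s : signature) (M : algebra s) (R S : prel M) : prel M :=
  bigjoin (fun a => a = R \/ a = S).

Definition identities (s : signature) := term s nat -> term s nat -> Prop.
Definition models (s : signature) (Sigma : identities s) (M : algebra s) : Prop :=
  forall p q, Sigma p q -> forall v : nat -> M, eval M v p = eval M v q.

Definition congruence_modular (s : signature) (Sigma : identities s) : Prop :=
  forall M : algebra s, models Sigma M ->
  forall a b g : prel M, is_con a -> is_con b -> is_con g -> subrel a g ->
    releq (cjoin a (cmeet b g)) (cmeet (cjoin a b) g).

Definition sumval (T : Type) (n k : nat) (a : 'I_n -> T) (c : 'I_k -> T)
  : 'I_n + 'I_k -> T :=
  fun z => match z with inl i => a i | inr j => c j end.

Definition TC (s : signature) (M : algebra s) (al be mu : prel M) : Prop :=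
  forall (n k : nat) (t : term s ('I_n + 'I_k)) (a b : 'I_n -> M)
         (c d : 'I_k -> M),
    (forall i, al (a i) (b i)) -> (forall j, be (c j) (d j)) ->
    (mu (eval M (sumval a c) t) (eval M (sumval a d) t) <->
     mu (eval M (sumval b c) t) (eval M (sumval b d) t)).

Definition comm (s : signature) (M : algebra s) (al be : prel M) : prel M :=
  fun x y => forall mu : prel M, is_con mu -> TC al be mu -> mu x y.

Definition carrow (s : signature) (M : algebra s) (be ga : prel M) : prel M :=
  bigjoin (fun al : prel M => is_con al /\ subrel (comm al be) ga).
Definition cperp (s : signature) (M : algebra s) (be : prel M) : prel M :=
  carrow be (@Delta M).

Section Quotient.
Variables (s : signature) (A : algebra s) (th : prel A).

Definition qcarrier : Type := {S : A -> Prop | exists a : A, S = th a}.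
Definition qclass (a : A) : qcarrier := exist _ (th a) (ex_intro (fun b => th a = th b) a (@Logic.eq_refl _ (th a))).
Definition qrepr (c : qcarrier) : A :=
  proj1_sig (constructive_indefinite_description _ (proj2_sig c)).
Definition qops (f : sym s) (cs : 'I_(arity f) -> qcarrier) : qcarrier :=
  qclass (ops A f (fun i => qrepr (cs i))).
Definition quot_alg : algebra s := @Algebra s qcarrier qops.

Definition quot_rel (g : prel A) : prel quot_alg :=
  fun c d => exists a b, c = qclass a /\ d = qclass b /\ g a b.
End Quotient.
Arguments quot_rel {s A} th g _ _.
Arguments quot_alg {s} A th.

(* Write C(α,β;μ) for the term condition [TC] and β → γ for [carrow].  In a
   congruence-modular variety the term condition has the two properties of
   the modular commutator that the theorem needs:
   (a) C(α,β;γ) and γ ≤ δ imply C(α,β;δ)                  ([TC_mono]);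
   (b) C(α,β;μ) implies C(β,α;μ)                          ([TC_sym]).
   Both are proved inside the algebra α ≤ A × A, using the congruence Δ_{α,β}
   generated by the pairs ((t(a,c), t(b,c)), (t(a,d), t(b,d))) with a α b and
   c β d, and the shifting lemma, which is where modularity enters.
   By (a), β → γ is the largest α' with C(α',β;γ) ([carrow_TC], [carrow_ub]);
   with (b) this yields (α ∨ θ) → γ = α → γ whenever θ ≤ γ ([carrow_join]).
   Finally, for θ ≤ γ the annihilator commutes with passing to A/θ
   ([quot_carrow]).  Part (1) of the theorem combines the last two facts,
   and part (2) is the case γ = θ, since Δ_{A/θ} = θ/θ ([Delta_quot]). *)

From mathcomp Require Import ssreflect ssrbool ssrfun eqtype ssrnat fintype bigop.
From Stdlib Require Import ClassicalEpsilon FunctionalExtensionality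
  PropExtensionality ProofIrrelevance Relations.
(* Imported last, so that its [subrel] shadows the one of ssrbool. *)

Set Implicit Arguments.
Unset Strict Implicit.
Unset Printing Implicit Defensive.

Lemma releq_eq (T : Type) (R S : prel T) : releq R S -> R = S.
Proof.
move=> H; apply: functional_extensionality => x.
apply: functional_extensionality => y; apply: propositional_extensionality; exact: H.
Qed.

Lemma sig_eq (T : Type) (P : T -> Prop) (x y : {z | P z}) : sval x = sval y -> x = y.
Proof.
case: x => x px; case: y => y py /= Exy; subst y; f_equal; exact: proof_irrelevance.
Qed.

Fixpoint rename (s : signature) (X Y : Type) (g : X -> Y) (t : term s X) : term s Y :=
  match t with
  | Var x => Var (g x)
  | App f ts => App f (fun i => rename g (ts i))
  end.

Lemma eval_rename (s : signature) (M : algebra s) (X Y : Type) (g : X -> Y)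
  (v : Y -> M) (t : term s X) :
  eval M v (rename g t) = eval M (fun x => v (g x)) t.
Proof.
elim: t => [x|f ts IH] //=; f_equal; apply: functional_extensionality => i; exact: IH.
Qed.

Lemma eval_ext (s : signature) (M : algebra s) (X : Type) (v w : X -> M) (t : term s X) :
  (forall x, v x = w x) -> eval M v t = eval M w t.
Proof. by move=> H; rewrite (functional_extensionality _ _ H). Qed.

Definition sumv (T X Y : Type) (a : X -> T) (c : Y -> T) : (X + Y)%type -> T :=
  fun z => match z with inl x => a x | inr y => c y end.

Section Congruences.
Variables (s : signature) (M : algebra s).

Lemma con_refl (R : prel M) : is_con R -> forall x, R x x.
Proof. by case. Qed.
Lemma con_sym (R : prel M) : is_con R -> forall x y, R x y -> R y x.
Proof. by case=> _ []. Qed.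
Lemma con_trans (R : prel M) : is_con R -> forall x y z, R x y -> R y z -> R x z.
Proof. by case=> _ [_ []]. Qed.
Lemma con_comp (R : prel M) : is_con R -> forall (f : sym s) (a b : 'I_(arity f) -> M),
  (forall i, R (a i) (b i)) -> R (ops M f a) (ops M f b).
Proof. by case=> _ [_ []]. Qed.

Lemma eval_con (R : prel M) (X : Type) (v w : X -> M) (t : term s X) :
  is_con R -> (forall x, R (v x) (w x)) -> R (eval M v t) (eval M w t).
Proof. move=> HR Hvw; elim: t => [x|f ts IH] //=; exact: con_comp. Qed.

Lemma eval_sumval_con (R : prel M) (n k : nat) (t : term s ('I_n + 'I_k))
  (a b : 'I_n -> M) (c d : 'I_k -> M) : is_con R ->
  (forall i, R (a i) (b i)) -> (forall j, R (c j) (d j)) ->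
  R (eval M (sumval a c) t) (eval M (sumval b d) t).
Proof. by move=> HR Hab Hcd; apply: eval_con => // -[i|j] /=. Qed.

Lemma bigjoin_con (P : prel M -> Prop) : is_con (bigjoin P).
Proof.
split; [|split; [|split]].
- by move=> x g Hg _; apply: con_refl.
- by move=> x y H g Hg Hs; apply: con_sym => //; apply: H.
- by move=> x y z H1 H2 g Hg Hs; apply: (con_trans Hg (H1 g Hg Hs) (H2 g Hg Hs)).
- by move=> f a b H g Hg Hs; apply: con_comp => // i; apply: H.
Qed.

Lemma bigjoin_ub (P : prel M -> Prop) (a : prel M) : P a -> subrel a (bigjoin P).
Proof. by move=> Pa x y Hxy g Hg Hs; apply: Hs Pa _ _ Hxy. Qed.

Lemma bigjoin_lub (P : prel M -> Prop) (g : prel M) :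
  is_con g -> (forall a, P a -> subrel a g) -> subrel (bigjoin P) g.
Proof. by move=> Hg Hs x y H; apply: H g Hg Hs. Qed.

Lemma cmeet_con (R S : prel M) : is_con R -> is_con S -> is_con (cmeet R S).
Proof.
move=> HR HS; split; [|split; [|split]].
- by move=> x; split; apply: con_refl.
- by move=> x y [H1 H2]; split; apply: con_sym.
- by move=> x y z [H1 H2] [H3 H4]; split; [apply: con_trans H1 H3|apply: con_trans H2 H4].
- by move=> f a b H; split; apply: con_comp => // i; case: (H i).
Qed.

Lemma Delta_con : is_con (@Delta M).
Proof.
split; [|split; [|split]]; rewrite /Delta //.
- by move=> x y z -> ->.
- by move=> f a b H; f_equal; apply: functional_extensionality.
Qed.

End Congruences.

Definition upd (X : Type) (n : nat) (g : 'I_n -> X) (i : 'I_n) (u : X) : 'I_n -> X :=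
  fun j => if j == i then u else g j.

(* A preorder Psi on n-tuples that relates tuples differing in one R-step in a
   single entry relates all tuples that are entrywise connected by R-chains:
   change the entries one at a time. *)
Lemma entrywise_chains (X : Type) (n : nat) (R : X -> X -> Prop)
  (Psi : ('I_n -> X) -> ('I_n -> X) -> Prop) :
  (forall g, Psi g g) -> (forall g h k, Psi g h -> Psi h k -> Psi g k) ->
  (forall g i u v, R u v -> Psi (upd g i u) (upd g i v)) ->
  forall a b, (forall i, clos_refl_trans X R (a i) (b i)) -> Psi a b.
Proof.
move=> Hrefl Htr Hstep a b Hab.
have Hchain g i u v : clos_refl_trans X R u v -> Psi (upd g i u) (upd g i v).
  elim=> [x y|x|x y z _ IH1 _ IH2]; [exact: Hstep|exact: Hrefl|exact: Htr IH1 IH2].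
pose mix m := fun j : 'I_n => if (j < m)%N then b j else a j.
have -> : b = mix n by apply: functional_extensionality => j; rewrite /mix ltn_ord.
suff: forall m, m <= n -> Psi a (mix m) by apply.
elim=> [|m IH] Hm; first by rewrite (_ : mix 0 = a) //; exact: functional_extensionality.
apply: Htr (IH (ltnW Hm)) _.
have -> : mix m = upd (mix m) (Ordinal Hm) (a (Ordinal Hm)).
  apply: functional_extensionality => j; rewrite /upd /mix.
  by case: eqP => [->|//]; rewrite /= ltnn.
have -> : mix m.+1 = upd (mix m) (Ordinal Hm) (b (Ordinal Hm)).
  apply: functional_extensionality => j; rewrite /upd /mix.
  case: eqP => [->|Hj]; first by rewrite /= ltnSn.
  rewrite ltnS leq_eqVlt; case: eqP => // Ej; case: Hj; exact: val_inj.
exact: Hchain.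
Qed.

Section Joins.
Variables (s : signature) (M : algebra s).

Definition family_step (P : prel M -> Prop) : prel M :=
  fun u v => exists e, P e /\ e u v.

Lemma bigjoin_chain (P : prel M -> Prop) : (forall e, P e -> is_con e) ->
  forall x y, bigjoin P x y -> clos_refl_trans M (family_step P) x y.
Proof.
move=> HP x y; apply; last by move=> a Pa u v Huv; apply: rt_step; exists a.
split; [|split; [|split]].
- by move=> z; apply: rt_refl.
- move=> u v; elim=> [u' v' [e [Pe H]]|u'|u' v' w' _ IH1 _ IH2].
  + by apply: rt_step; exists e; split => //; apply: con_sym (HP e Pe) _ _ H.
  + exact: rt_refl.
  + exact: rt_trans IH2 IH1.
- by move=> u v w H1 H2; apply: rt_trans H1 H2.
- move=> f; apply: (entrywise_chains
    (Psi := fun g h => clos_refl_trans M (family_step P) (ops M f g) (ops M f h))).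
  + by move=> g; apply: rt_refl.
  + by move=> g h k H1 H2; apply: rt_trans H1 H2.
  + move=> g i u v [e [Pe Huv]]; apply: rt_step; exists e; split => //.
    apply: con_comp (HP e Pe) _ _ _ _ => j; rewrite /upd; case: eqP => _ //.
    exact: con_refl (HP e Pe) _.
Qed.

Lemma TC_bigjoin (P : prel M -> Prop) (be mu : prel M) :
  (forall e, P e -> is_con e) -> (forall e, P e -> TC e be mu) -> TC (bigjoin P) be mu.
Proof.
move=> HP HT n k t a b c d Hab Hcd.
pose Phi := fun g : 'I_n -> M => mu (eval M (sumval g c) t) (eval M (sumval g d) t).
apply: (entrywise_chains (R := family_step P) (Psi := fun g h => Phi g <-> Phi h)).
- by move=> g.
- by move=> g h l H1 H2; apply: iff_trans H1 H2.
- move=> g i u v [e [Pe Huv]]; apply: (HT e Pe) => // j; rewrite /upd.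
  case: eqP => _ //; exact: con_refl (HP e Pe) _.
- by move=> i; apply: bigjoin_chain => //; apply: Hab.
Qed.

Lemma TC_below (al be mu : prel M) : is_con mu -> subrel al mu -> TC al be mu.
Proof.
move=> Hmu Hsub n k t a b c d Hab Hcd.
have Ha j : mu (a j) (b j) by apply: Hsub.
have Hc : mu (eval M (sumval a c) t) (eval M (sumval b c) t).
  by apply: eval_sumval_con => // j; apply: con_refl.
have Hd : mu (eval M (sumval a d) t) (eval M (sumval b d) t).
  by apply: eval_sumval_con => // j; apply: con_refl.
split=> H.
- exact: (con_trans Hmu (con_sym Hmu Hc) (con_trans Hmu H Hd)).
- exact: (con_trans Hmu Hc (con_trans Hmu H (con_sym Hmu Hd))).
Qed.

Lemma TC_antitone (al be be' mu : prel M) : subrel be be' -> TC al be' mu -> TC al be mu.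
Proof. by move=> Hs H n k t a b c d Hab Hcd; apply: H => // j; apply: Hs. Qed.

Definition TC_half (al be mu : prel M) : Prop :=
  forall (n k : nat) (t : term s ('I_n + 'I_k)) (a b : 'I_n -> M) (c d : 'I_k -> M),
    (forall i, al (a i) (b i)) -> (forall j, be (c j) (d j)) ->
    mu (eval M (sumval a c) t) (eval M (sumval a d) t) ->
    mu (eval M (sumval b c) t) (eval M (sumval b d) t).

Lemma TC_of_half (al be mu : prel M) :
  (forall x y, al x y -> al y x) -> TC_half al be mu -> TC al be mu.
Proof.
move=> Hsym Hh n k t a b c d Hab Hcd; split; first exact: Hh.
by apply: Hh => // i; apply: Hsym.
Qed.

Lemma comm_con (al be : prel M) : is_con (comm al be).
Proof.
split; [|split; [|split]].
- by move=> x mu Hmu _; apply: con_refl.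
- by move=> x y H mu Hmu HT; apply: con_sym => //; apply: H.
- by move=> x y z H1 H2 mu Hmu HT; apply: (con_trans Hmu (H1 mu Hmu HT) (H2 mu Hmu HT)).
- by move=> f a b H mu Hmu HT; apply: con_comp => // i; apply: H.
Qed.

Lemma TC_comm (al be : prel M) : TC al be (comm al be).
Proof.
move=> n k t a b c d Hab Hcd; split=> H mu Hmu HT.
- by apply/(HT n k t a b c d Hab Hcd); apply: H.
- by apply/(HT n k t a b c d Hab Hcd); apply: H.
Qed.

Lemma comm_least (al be ga : prel M) : is_con ga -> TC al be ga -> subrel (comm al be) ga.
Proof. by move=> Hg HT x y H; apply: H. Qed.

Lemma TC_fin (al be mu : prel M) : TC al be mu ->
  forall (X Y : finType) (t : term s (X + Y)) (a b : X -> M) (c d : Y -> M),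
  (forall x, al (a x) (b x)) -> (forall y, be (c y) (d y)) ->
  (mu (eval M (sumv a c) t) (eval M (sumv a d) t) <->
   mu (eval M (sumv b c) t) (eval M (sumv b d) t)).
Proof.
move=> HT X Y t a b c d Hab Hcd.
pose g := fun z : (X + Y)%type => match z with
  | inl x => @inl 'I_#|X| 'I_#|Y| (enum_rank x) | inr y => inr (enum_rank y) end.
have E (a' : X -> M) (c' : Y -> M) :
    eval M (sumval (fun i => a' (enum_val i)) (fun j => c' (enum_val j))) (rename g t)
    = eval M (sumv a' c') t.
  by rewrite eval_rename; apply: eval_ext => -[x|y] /=; rewrite enum_rankK.
rewrite -!E; apply: HT => i; [exact: Hab|exact: Hcd].
Qed.

End Joins.

Section Subproduct.
Variables (s : signature) (M1 M2 : algebra s) (R : M1 -> M2 -> Prop).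
Hypothesis R_comp : forall (f : sym s) (a : 'I_(arity f) -> M1) (b : 'I_(arity f) -> M2),
  (forall i, R (a i) (b i)) -> R (ops M1 f a) (ops M2 f b).

Definition sp_carrier := {p : M1 * M2 | R p.1 p.2}.
Definition sp_ops (f : sym s) (cs : 'I_(arity f) -> sp_carrier) : sp_carrier :=
  exist _ (ops M1 f (fun i => (sval (cs i)).1), ops M2 f (fun i => (sval (cs i)).2))
    (R_comp (fun i => svalP (cs i))).
Definition subprod : algebra s := @Algebra s sp_carrier sp_ops.

Lemma eval_subprod (X : Type) (v : X -> subprod) (t : term s X) :
  sval (eval subprod v t) =
  (eval M1 (fun x => (sval (v x)).1) t, eval M2 (fun x => (sval (v x)).2) t).
Proof.
elim: t => [x|f ts IH] /=; first by case: (sval (v x)).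
by f_equal; f_equal; apply: functional_extensionality => i; rewrite IH.
Qed.

Lemma models_subprod (Sigma : identities s) :
  models Sigma M1 -> models Sigma M2 -> models Sigma subprod.
Proof.
move=> H1 H2 p q Hpq v; apply: sig_eq; rewrite !eval_subprod.
by rewrite (H1 p q Hpq) (H2 p q Hpq).
Qed.

Definition pb1 (g : prel M1) : prel subprod := fun p q => g (sval p).1 (sval q).1.
Definition pb2 (g : prel M2) : prel subprod := fun p q => g (sval p).2 (sval q).2.

Lemma pb1_con (g : prel M1) : is_con g -> is_con (pb1 g).
Proof.
move=> Hg; rewrite /pb1; split; [|split; [|split]].
- by move=> x; apply: con_refl.
- by move=> x y; apply: con_sym.
- by move=> x y z; apply: con_trans.
- by move=> f a b H; apply: (con_comp Hg) => i; apply: H.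
Qed.

Lemma pb2_con (g : prel M2) : is_con g -> is_con (pb2 g).
Proof.
move=> Hg; rewrite /pb2; split; [|split; [|split]].
- by move=> x; apply: con_refl.
- by move=> x y; apply: con_sym.
- by move=> x y z; apply: con_trans.
- by move=> f a b H; apply: (con_comp Hg) => i; apply: H.
Qed.
End Subproduct.
Arguments pb1 {s M1 M2 R} R_comp g _ _.
Arguments pb2 {s M1 M2 R} R_comp g _ _.
Arguments models_subprod {s M1 M2 R} R_comp {Sigma} _ _ [p q] _ v.

(* Proof: (z, w) ∈ ((γ ∧ α) ∨ β) ∧ α = (γ ∧ α) ∨ (β ∧ α) ≤ γ. *)
Lemma shifting (s : signature) (Sigma : identities s) : congruence_modular Sigma ->
  forall N : algebra s, models Sigma N ->
  forall al be ga : prel N, is_con al -> is_con be -> is_con ga ->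
  (forall x y, al x y -> be x y -> ga x y) ->
  forall x y z w, al x y -> al z w -> be x z -> be y w -> ga x y -> ga z w.
Proof.
move=> Hcm N HN al be ga Hal Hbe Hga Hsub x y z w Hxy Hzw Hxz Hyw GAxy.
have Hmod := Hcm N HN _ _ _ (cmeet_con Hga Hal) Hbe Hal
  (fun u v (H : cmeet ga al u v) => proj2 H).
have : cmeet (cjoin (cmeet ga al) be) al z w.
  split => // g Hg Hs.
  have Jzx : g z x by apply: Hs; [right|]; last exact: con_sym Hbe _ _ Hxz.
  have Jxy : g x y by apply: Hs; [left|].
  have Jyw : g y w by apply: Hs; [right|].
  exact: (con_trans Hg (con_trans Hg Jzx Jxy) Jyw).
move/(Hmod z w); apply=> // e [->|->] u v; first by case.
by case=> H1 H2; apply: Hsub.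
Qed.

(* A configuration: a term t(x, y) together with tuples a, b for x and c, d
   for y.  It stands for the pair ((t(a,c), t(b,c)), (t(a,d), t(b,d))). *)
Record cfg (s : signature) (A : Type) := Cfg {
  cX : finType; cY : finType; ct : term s (cX + cY);
  ca : cX -> A; cb : cX -> A; cc : cY -> A; cd : cY -> A }.
Arguments cX {s A} c. Arguments cY {s A} c. Arguments ct {s A} c.
Arguments ca {s A} c _. Arguments cb {s A} c _.
Arguments cc {s A} c _. Arguments cd {s A} c _.

Section DeltaAlphaBeta.
Variables (s : signature) (Sigma : identities s).
Hypothesis Hcm : congruence_modular Sigma.
Variables (A : algebra s) (al be : prel A).
Hypotheses (HA : models Sigma A) (Hal : is_con al) (Hbe : is_con be).

Definition Aal := subprod (con_comp Hal).

Lemma models_Aal : models Sigma Aal.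
Proof. exact: models_subprod HA HA. Qed.

Definition cfg_ok (w : cfg s A) (P Q : Aal) :=
  (forall x, al (ca w x) (cb w x)) /\ (forall y, be (cc w y) (cd w y)) /\
  sval P = (eval A (sumv (ca w) (cc w)) (ct w), eval A (sumv (cb w) (cc w)) (ct w)) /\
  sval Q = (eval A (sumv (ca w) (cd w)) (ct w), eval A (sumv (cb w) (cd w)) (ct w)).

Definition cfg_rel (P Q : Aal) : Prop := exists w, cfg_ok w P Q.

Lemma cfg_rel_refl P : cfg_rel P P.
Proof.
case: P => [[x y] Hxy].
exists (@Cfg s A unit unit (Var (inl tt)) (fun _ => x) (fun _ => y) (fun _ => x) (fun _ => x)).
by split; [|split; [move=> ? /=; exact: con_refl|]].
Qed.

Lemma cfg_rel_diag (P Q : Aal) u u' :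
  be u u' -> sval P = (u, u) -> sval Q = (u', u') -> cfg_rel P Q.
Proof.
move=> Hu EP EQ.
exists (@Cfg s A unit unit (Var (inr tt)) (fun _ => u) (fun _ => u) (fun _ => u) (fun _ => u')).
by split; [move=> ? /=; exact: con_refl|].
Qed.

Lemma cfg_rel_sym P Q : cfg_rel P Q -> cfg_rel Q P.
Proof.
case=> w [Hab [Hcd [EP EQ]]].
exists (@Cfg s A (cX w) (cY w) (ct w) (ca w) (cb w) (cd w) (cc w)).
by split => //; split => //= y; apply: con_sym Hbe _ _ (Hcd y).
Qed.

(* Configurations for the arguments of an operation f combine, by disjoint
   union of their variables, into a configuration for f. *)
Lemma cfg_rel_comp (f : sym s) (a b : 'I_(arity f) -> Aal) :
  (forall i, cfg_rel (a i) (b i)) -> cfg_rel (ops Aal f a) (ops Aal f b).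
Proof.
move=> /ClassicalEpsilon.choice [w Hw].
pose X := {l : 'I_(arity f) & cX (w l)}.
pose Y := {l : 'I_(arity f) & cY (w l)}.
pose lift l := fun z : (cX (w l) + cY (w l))%type => match z with
  | inl x => @inl X Y (existT _ l x) | inr y => @inr X Y (existT _ l y) end.
exists (@Cfg s A (X : finType) (Y : finType)
   (App f (fun l => rename (lift l) (ct (w l))))
   (fun p => ca (w (projT1 p)) (projT2 p)) (fun p => cb (w (projT1 p)) (projT2 p))
   (fun p => cc (w (projT1 p)) (projT2 p)) (fun p => cd (w (projT1 p)) (projT2 p))).
split; first by case=> l x /=; case: (Hw l).
split; first by case=> l y /=; case: (Hw l) => _ [].
rewrite /=; split; f_equal; f_equal; apply: functional_extensionality => l;
  rewrite eval_rename; case: (Hw l) => _ [_ [EP EQ]]; rewrite ?EP ?EQ /=.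
all: by apply: eval_ext => -[x|y].
Qed.

(* Iterated relational squares T_0 = cfg_rel, T_{k+1} = T_k ∘ T_k; their
   union is Δ_{α,β}, the congruence of Aal generated by cfg_rel. *)
Fixpoint Tpow (k : nat) : prel Aal :=
  match k with 0 => cfg_rel | k'.+1 => fun P Q => exists R, Tpow k' P R /\ Tpow k' R Q end.

Lemma Tpow_refl k P : Tpow k P P.
Proof. by elim: k P => [|k IH] P /=; [apply: cfg_rel_refl|exists P]. Qed.

Lemma Tpow_sym k P Q : Tpow k P Q -> Tpow k Q P.
Proof.
elim: k P Q => [|k IH] P Q /=; first exact: cfg_rel_sym.
by case=> R [H1 H2]; exists R; split; apply: IH.
Qed.

Lemma Tpow_comp k (f : sym s) (a b : 'I_(arity f) -> Aal) :
  (forall i, Tpow k (a i) (b i)) -> Tpow k (ops Aal f a) (ops Aal f b).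
Proof.
elim: k a b => [|k IH] a b /=; first exact: cfg_rel_comp.
move=> /ClassicalEpsilon.choice [h Hh].
by exists (ops Aal f h); split; apply: IH => i; case: (Hh i).
Qed.

Lemma Tpow_mono k j : k <= j -> forall P Q, Tpow k P Q -> Tpow j P Q.
Proof.
elim: j => [|j IH]; first by rewrite leqn0 => /eqP ->.
rewrite leq_eqVlt => /orP [/eqP -> //|Hlt] P Q H.
by exists Q; split; [apply: IH|apply: Tpow_refl].
Qed.

Definition Dab (P Q : Aal) : Prop := exists k, Tpow k P Q.

Lemma Dab_con : is_con Dab.
Proof.
split; [|split; [|split]].
- by move=> P; exists 0; apply: Tpow_refl.
- by move=> P Q [k H]; exists k; apply: Tpow_sym.
- move=> P Q R [k1 H1] [k2 H2]; exists (maxn k1 k2).+1; exists Q; split.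
  + by apply: Tpow_mono H1; apply: leq_maxl.
  + by apply: Tpow_mono H2; apply: leq_maxr.
- move=> f a b /ClassicalEpsilon.choice [ks Hks].
  exists (\max_(l < arity f) ks l); apply: Tpow_comp => l.
  by apply: Tpow_mono (Hks l); apply: (@leq_bigmax _ ks l).
Qed.

Definition transfers (ga : prel A) (U : prel Aal) :=
  forall P Q, U P Q -> ga (sval P).1 (sval Q).1 -> ga (sval P).2 (sval Q).2.

Lemma transfers_cfg (ga : prel A) : TC al be ga -> transfers ga cfg_rel.
Proof.
move=> HT P Q [w [Hab [Hcd [-> ->]]]] /=.
exact: (proj1 (TC_fin HT (ct w) Hab Hcd)).
Qed.

(* Given P U Q U S with P₁ γ S₁, work
   in the algebra U ≤ Aal × Aal with the kernels k1, k2 of the projections and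
   the congruence Z "first coordinates of both components γ-related".  The
   pairs (P,P), (P,Q), (S,Q), (S,S) show (P,P) ((k2 ∧ Z) ∨ k1) ∧ Z (S,S), so by
   modularity (P,P) (k2 ∧ Z) ∨ (k1 ∧ Z) (S,S); along such a chain the second
   coordinate of the first component stays γ-related to P₂. *)
Section Square.
Variables (ga : prel A) (U : prel Aal).
Hypothesis U_comp : forall (f : sym s) (a b : 'I_(arity f) -> Aal),
  (forall i, U (a i) (b i)) -> U (ops Aal f a) (ops Aal f b).
Hypotheses (Hga : is_con ga) (U_refl : forall P, U P P) (U_sym : forall P Q, U P Q -> U Q P).
Hypothesis U_transfers : transfers ga U.

Let N := subprod U_comp.
Let k1 := pb1 U_comp (@Delta Aal).
Let k2 := pb2 U_comp (@Delta Aal).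
Let Z := cmeet (pb1 U_comp (pb1 (con_comp Hal) ga)) (pb2 U_comp (pb1 (con_comp Hal) ga)).
Let diag (P : Aal) : N := exist _ (P, P) (U_refl P).

Let k1_con : is_con k1. Proof. exact/pb1_con/Delta_con. Qed.
Let Z_con : is_con Z. Proof. by apply: cmeet_con; [apply: pb1_con|apply: pb2_con]; apply: pb1_con. Qed.

Lemma square_corners (P Q S : Aal) : U P Q -> U Q S -> ga (sval P).1 (sval S).1 ->
  cjoin (cmeet k2 Z) (cmeet k1 Z) (diag P) (diag S).
Proof.
move=> HPQ HQS HPS.
have HN : models Sigma N := models_subprod U_comp models_Aal models_Aal.
have Hk2Z : is_con (cmeet k2 Z) by apply/cmeet_con/Z_con/pb2_con/Delta_con.
apply/(Hcm HN Hk2Z k1_con Z_con (fun u v (H : cmeet k2 Z u v) => proj2 H)).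
split; last by split.
move=> g Hg Hs.
have J1 : g (diag P) (exist _ (P, Q) HPQ) by apply: (Hs k1); [right|].
have J2 : g (exist _ (P, Q) HPQ) (exist _ (S, Q) (U_sym HQS)).
  apply: (Hs (cmeet k2 Z)); first by left.
  rewrite /k2 /Z; split; first by [].
  by split; [exact: HPS|exact: (con_refl Hga)].
have J3 : g (exist _ (S, Q) (U_sym HQS)) (diag S) by apply: (Hs k1); [right|].
exact: (con_trans Hg (con_trans Hg J1 J2) J3).
Qed.

Let chain_inv (P : Aal) (f : N) : Prop :=
  Z (diag P) f /\ ga (sval P).2 (sval (sval f).1).2.

(* Along k1 the first component is fixed; along k2 ∧ Z the second component is
   fixed and, by transfer within both components, the invariant is kept. *)
Lemma chain_inv_step (P : Aal) (u v : N) :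
  family_step (fun e => e = cmeet k2 Z \/ e = cmeet k1 Z) u v ->
  chain_inv P u -> chain_inv P v.
Proof.
have Z_transfers (f : N) : Z (diag P) f -> ga (sval (sval f).1).2 (sval (sval f).2).2.
  move=> [Z1 Z2]; apply: U_transfers (svalP f) _.
  exact: (con_trans Hga (con_sym Hga Z1) Z2).
case=> e [[->|->] [Huv Zuv]] [Zu Iu]; have Zv := con_trans Z_con Zu Zuv.
- split => //; apply: (con_trans Hga Iu); apply: (con_trans Hga (Z_transfers u Zu)).
  rewrite /k2 /pb2 /Delta in Huv; rewrite Huv; exact: con_sym Hga _ _ (Z_transfers v Zv).
- by split; last rewrite -Huv.
Qed.

Lemma transfers_square : transfers ga (fun P Q => exists R, U P R /\ U R Q).
Proof.
move=> P S [Q [HPQ HQS]] HPS.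
have Hc e : e = cmeet k2 Z \/ e = cmeet k1 Z -> is_con e.
  by case=> ->; apply/cmeet_con/Z_con; [apply/pb2_con/Delta_con|].
have chain := bigjoin_chain Hc (square_corners HPQ HQS HPS).
suff: chain_inv P (diag S) by case.
elim: chain (conj (con_refl Z_con (diag P)) (con_refl Hga _) : chain_inv P (diag P)).
- by move=> u v; apply: chain_inv_step.
- by [].
- by move=> u v w _ IH1 _ IH2 /IH1 /IH2.
Qed.

End Square.

Lemma transfers_Dab (ga : prel A) : is_con ga -> TC al be ga -> transfers ga Dab.
Proof.
move=> Hga HT P Q [k]; move: P Q; elim: k => [|k IH] /=; first exact: transfers_cfg.
apply: transfers_square => //; [exact: Tpow_comp|exact: Tpow_refl|exact: Tpow_sym].
Qed.

Lemma Dab_columns (n k : nat) (t : term s ('I_n + 'I_k)) (a b : 'I_n -> A)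
  (c d : 'I_k -> A) (Hab : forall i, al (a i) (b i)) (Hcd : forall j, be (c j) (d j))
  (HP : al (eval A (sumval a c) t) (eval A (sumval b c) t))
  (HQ : al (eval A (sumval a d) t) (eval A (sumval b d) t)) :
  Dab (exist _ (_, _) HP) (exist _ (_, _) HQ).
Proof. by exists 0, (@Cfg s A ('I_n : finType) ('I_k : finType) t a b c d). Qed.

(* In the square
   (r, r'), (P, Q) of Aal, where r = (t(a,c), t(a,c)), r' = (t(a,d), t(a,d)),
   the sides r–r' and P–Q are Δ_{α,β}-related, r–P and r'–Q have equal first
   coordinates, and Δ_{α,β} ∧ (equal first coordinates) ≤ (second coordinates
   δ-related) because Δ_{α,β} transfers γ ≤ δ.  Shifting moves t(a,c) δ t(a,d)
   along to t(b,c) δ t(b,d). *)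
Lemma TC_mono_half (ga de : prel A) : is_con ga -> is_con de -> TC al be ga ->
  subrel ga de -> TC_half al be de.
Proof.
move=> Hga Hde HT Hsub n k t a b c d Hab Hcd H.
have HP : al (eval A (sumval a c) t) (eval A (sumval b c) t).
  by apply: eval_sumval_con => // j; apply: con_refl.
have HQ : al (eval A (sumval a d) t) (eval A (sumval b d) t).
  by apply: eval_sumval_con => // j; apply: con_refl.
have Hr : be (eval A (sumval a c) t) (eval A (sumval a d) t).
  by apply: eval_sumval_con => // j; apply: con_refl.
pose r : Aal := exist _ (_, _) (con_refl Hal (eval A (sumval a c) t)).
pose r' : Aal := exist _ (_, _) (con_refl Hal (eval A (sumval a d) t)).
have Drr' : Dab r r' by exists 0; exact: (cfg_rel_diag Hr).
have := shifting Hcm models_Aal Dab_con (pb1_con _ (@Delta_con _ A)) (pb2_con _ Hde) _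
  Drr' (Dab_columns Hab Hcd HP HQ) erefl erefl H.
apply.
move=> x y Dxy Exy; apply: Hsub; apply: transfers_Dab Dxy _ => //.
by rewrite /pb1 /Delta in Exy; rewrite Exy; apply: con_refl.
Qed.

Lemma TC_mono (ga de : prel A) : is_con ga -> is_con de -> TC al be ga ->
  subrel ga de -> TC al be de.
Proof.
move=> Hga Hde HT Hsub; apply: TC_of_half (con_sym Hal) _.
exact: TC_mono_half Hga Hde HT Hsub.
Qed.

(* With the variables of t swapped, the
   columns P = (t(a,c), t(a,d)) and Q = (t(b,c), t(b,d)) of a configuration for
   α,β sit above the diagonal pairs over t(a,c) β t(b,c); shifting along the
   vertical equal-first-coordinate sides moves t(a,c) μ t(a,d) to t(b,c) μ t(b,d). *)
Lemma TC_sym_half (mu : prel A) : is_con mu -> TC al be mu -> TC_half be al mu.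
Proof.
move=> Hmu HT n k t a b c d Hab Hcd H.
have HP : al (eval A (sumval a c) t) (eval A (sumval a d) t).
  by apply: eval_sumval_con => // i; apply: con_refl.
have HQ : al (eval A (sumval b c) t) (eval A (sumval b d) t).
  by apply: eval_sumval_con => // i; apply: con_refl.
have Hr : be (eval A (sumval a c) t) (eval A (sumval b c) t).
  by apply: eval_sumval_con => // j; apply: con_refl.
pose r : Aal := exist _ (_, _) (con_refl Hal (eval A (sumval a c) t)).
pose r' : Aal := exist _ (_, _) (con_refl Hal (eval A (sumval b c) t)).
have Drr' : Dab r r' by exists 0; exact: (cfg_rel_diag Hr).
pose swap := fun z : ('I_n + 'I_k)%type => match z with
  | inl i => @inr 'I_k 'I_n i | inr j => inl j end.
have Eswap (a' : 'I_n -> A) (c' : 'I_k -> A) :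
    eval A (sumv c' a') (rename swap t) = eval A (sumval a' c') t.
  by rewrite eval_rename; apply: eval_ext => -[i|j].
pose P : Aal := exist _ (_, _) HP.
pose Q : Aal := exist _ (_, _) HQ.
have DPQ : Dab P Q.
  exists 0, (@Cfg s A ('I_k : finType) ('I_n : finType) (rename swap t) c d a b).
  by split => //; split => //; split; rewrite /= !Eswap.
have := shifting Hcm models_Aal (pb1_con _ (@Delta_con _ A)) Dab_con (pb2_con _ Hmu) _
  (erefl : pb1 _ (@Delta A) r P) (erefl : pb1 _ (@Delta A) r' Q) Drr' DPQ H.
apply.
move=> x y Exy Dxy; apply: transfers_Dab Dxy _ => //.
by rewrite /pb1 /Delta in Exy; rewrite Exy; apply: con_refl.
Qed.

Lemma TC_sym (mu : prel A) : is_con mu -> TC al be mu -> TC be al mu.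
Proof. by move=> Hmu HT; apply: TC_of_half (con_sym Hbe) _; apply: TC_sym_half. Qed.

End DeltaAlphaBeta.

Section Annihilator.
Variables (s : signature) (Sigma : identities s).
Hypothesis Hcm : congruence_modular Sigma.
Variables (A : algebra s) (HA : models Sigma A).

(* [α,β] ≤ δ implies C(α,β;δ), by upward closure from C(α,β;[α,β]). *)
Lemma TC_of_comm (al be de : prel A) : is_con al -> is_con be -> is_con de ->
  subrel (comm al be) de -> TC al be de.
Proof.
move=> Hal Hbe Hde Hs.
by apply: (TC_mono Hcm HA Hal Hbe (comm_con al be) Hde) Hs; apply: TC_comm.
Qed.

Lemma carrow_TC (ze ga : prel A) : is_con ze -> is_con ga -> TC (carrow ze ga) ze ga.
Proof. by move=> Hz Hg; apply: TC_bigjoin => e [He Hs] //; apply: TC_of_comm. Qed.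

Lemma carrow_ub (e ze ga : prel A) : is_con e -> is_con ga -> TC e ze ga ->
  subrel e (carrow ze ga).
Proof. by move=> He Hg HT; apply: bigjoin_ub; split => //; apply: comm_least Hg HT. Qed.

(* (α ∨ θ) → γ = α → γ when θ ≤ γ: by symmetry C(α,β;γ) and C(θ,β;γ) give
   C(β, α ∨ θ; γ), i.e. C(α ∨ θ, β; γ). *)
Lemma carrow_join (al th ga : prel A) : is_con al -> is_con th -> is_con ga ->
  subrel th ga -> carrow (cjoin al th) ga = carrow al ga.
Proof.
move=> Hal Hth Hga Hsub.
have Hj : is_con (cjoin al th) by apply: bigjoin_con.
have He : is_con (carrow al ga) by apply: bigjoin_con.
apply: releq_eq => x y; split; move: x y; apply: carrow_ub => //; try exact: bigjoin_con.
- by apply: TC_antitone (carrow_TC Hj Hga); apply: bigjoin_ub; left.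
- apply: (TC_sym Hcm HA Hj He Hga); apply: TC_bigjoin => e; first by case=> ->.
  case=> ->; last exact: TC_below.
  by apply: (TC_sym Hcm HA He Hal Hga); apply: carrow_TC.
Qed.
End Annihilator.

Section Quotient.
Variables (s : signature) (A : algebra s) (th : prel A).
Hypothesis Hth : is_con th.
Notation Q := (quot_alg A th).
Notation cl := (qclass th).

Lemma qclass_eq a b : th a b -> cl a = cl b.
Proof.
move=> H; apply: sig_eq; apply: functional_extensionality => x.
apply: propositional_extensionality; split => Hx.
- exact: (con_trans Hth (con_sym Hth H) Hx).
- exact: (con_trans Hth H Hx).
Qed.

Lemma qclass_inj a b : cl a = cl b -> th a b.
Proof. by move/(f_equal (@proj1_sig _ _)) => /= ->; apply: con_refl. Qed.

Lemma qclass_surj (c : Q) : exists a, c = cl a.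
Proof. by case: c => S [a Ea]; exists a; apply: sig_eq. Qed.

Lemma qrepr_class a : th (qrepr (cl a)) a.
Proof.
apply: qclass_inj; apply: sig_eq => /=.
by rewrite /qrepr; case: (constructive_indefinite_description _ _) => r /= <-.
Qed.

Lemma qops_class (f : sym s) (a : 'I_(arity f) -> A) :
  ops Q f (fun i => cl (a i)) = cl (ops A f a).
Proof. by apply: qclass_eq; apply: con_comp => // i; apply: qrepr_class. Qed.

Lemma eval_quot (X : Type) (v : X -> A) (t : term s X) :
  eval Q (fun x => cl (v x)) t = cl (eval A v t).
Proof.
elim: t => [x|f ts IH] //; rewrite [LHS]/= -qops_class.
by congr (ops Q f); apply: functional_extensionality => i; apply: IH.
Qed.

Lemma eval_quot_sum n k (t : term s ('I_n + 'I_k)) (a : 'I_n -> A) (c : 'I_k -> A) :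
  eval Q (sumval (fun i => cl (a i)) (fun j => cl (c j))) t = cl (eval A (sumval a c) t).
Proof. by rewrite -eval_quot; apply: eval_ext => -[i|j]. Qed.

Lemma quot_rel_class (g : prel A) a b : is_con g -> subrel th g ->
  quot_rel th g (cl a) (cl b) <-> g a b.
Proof.
move=> Hg Hs; split; last by move=> H; exists a, b.
case=> a' [b' [/qclass_inj Ha [/qclass_inj Hb H]]].
exact: (con_trans Hg (Hs _ _ Ha) (con_trans Hg H (con_sym Hg (Hs _ _ Hb)))).
Qed.

Lemma quot_rel_lift (I : Type) (g : prel A) (c d : I -> Q) :
  (forall i, quot_rel th g (c i) (d i)) ->
  exists a b : I -> A, c = (fun i => cl (a i)) /\ d = (fun i => cl (b i)) /\
                       forall i, g (a i) (b i).
Proof.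
move=> H.
have /ClassicalEpsilon.choice [h Hh] :
    forall i, exists p : A * A, c i = cl p.1 /\ d i = cl p.2 /\ g p.1 p.2.
  by move=> i; case: (H i) => a [b Hab]; exists (a, b).
exists (fun i => (h i).1), (fun i => (h i).2); split; last split.
- by apply: functional_extensionality => i; case: (Hh i).
- by apply: functional_extensionality => i; case: (Hh i) => _ [].
- by move=> i; case: (Hh i) => _ [].
Qed.

Lemma quot_rel_con (g : prel A) : is_con g -> subrel th g -> is_con (quot_rel th g).
Proof.
move=> Hg Hs; have Hcl := quot_rel_class _ _ Hg Hs.
split; [|split; [|split]].
- by move=> c; have [a ->] := qclass_surj c; apply/Hcl; apply: con_refl.
- move=> c d; have [a ->] := qclass_surj c; have [b ->] := qclass_surj d.
  by move/Hcl => H; apply/Hcl; apply: con_sym.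
- move=> c d e; have [a ->] := qclass_surj c; have [b ->] := qclass_surj d.
  have [x ->] := qclass_surj e.
  by move=> /Hcl H1 /Hcl H2; apply/Hcl; apply: con_trans H1 H2.
- move=> f c d /quot_rel_lift [a [b [-> [-> Hab]]]].
  by rewrite !qops_class; apply/Hcl; apply: con_comp.
Qed.

Definition qpb (e : prel Q) : prel A := fun x y => e (cl x) (cl y).

Lemma qpb_con (e : prel Q) : is_con e -> is_con (qpb e).
Proof.
move=> He; rewrite /qpb; split; [|split; [|split]].
- by move=> x; apply: (con_refl He).
- by move=> x y; apply: (con_sym He).
- by move=> x y z; apply: (con_trans He).
- by move=> f a b H; rewrite -!qops_class; apply: (con_comp He).
Qed.

Lemma TC_qpb (e z mu : prel Q) (ze : prel A) :
  TC e z mu -> (forall c d, ze c d -> z (cl c) (cl d)) -> TC (qpb e) ze (qpb mu).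
Proof.
move=> HT Hz n k t a b c d Hab Hcd.
have := HT n k t (fun i => cl (a i)) (fun i => cl (b i)) (fun j => cl (c j))
  (fun j => cl (d j)) Hab (fun j => Hz _ _ (Hcd j)).
by rewrite /qpb !eval_quot_sum.
Qed.

Lemma TC_quot_rel (ep ze ga : prel A) : is_con ga -> subrel th ga -> TC ep ze ga ->
  TC (quot_rel th ep) (quot_rel th ze) (quot_rel th ga).
Proof.
move=> Hga Hs HT n k t a' b' c' d'.
move=> /quot_rel_lift [a [b [-> [-> Hab]]]] /quot_rel_lift [c [d [-> [-> Hcd]]]].
by rewrite !eval_quot_sum !(quot_rel_class _ _ Hga Hs); apply: HT.
Qed.

Lemma Delta_quot : @Delta Q = quot_rel th th.
Proof.
apply: releq_eq => c d; split.
- by move=> <-; have [a ->] := qclass_surj c; exists a, a; split => //; split => //; apply: con_refl.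
- by case=> a [b [-> [-> H]]]; apply: qclass_eq.
Qed.

Variables (Sigma : identities s).
Hypotheses (Hcm : congruence_modular Sigma) (HA : models Sigma A).

(* For θ ≤ γ: (α/θ) → (γ/θ) = (α → γ)/θ.  "⊆": a congruence e of A/θ with
   C(e, α/θ; γ/θ) pulls back to e' with C(e', α; γ) (using upward closure),
   so e' ≤ α → γ.  "⊇": C(α → γ, α; γ) passes to the quotient. *)
Lemma quot_carrow (al ga : prel A) : is_con al -> is_con ga -> subrel th ga ->
  releq (carrow (quot_rel th al) (quot_rel th ga)) (quot_rel th (carrow al ga)).
Proof.
move=> Hal Hga Hs.
have Hk : is_con (carrow al ga) by apply: bigjoin_con.
have Hth_k : subrel th (carrow al ga) by apply: carrow_ub => //; apply: TC_below.
move=> x y; split.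
- apply: (bigjoin_lub (quot_rel_con Hk Hth_k)) => e [He Hce] c d Hcd.
  have [a Ea] := qclass_surj c; have [b Eb] := qclass_surj d.
  rewrite Ea Eb in Hcd *; apply/quot_rel_class => //.
  have HT := TC_qpb (@TC_comm _ _ e (quot_rel th al))
    (fun c d (H : al c d) => ex_intro _ c (ex_intro _ d (conj erefl (conj erefl H)))).
  have HT' := TC_mono Hcm HA (qpb_con He) Hal (qpb_con (comm_con _ _)) Hga HT
    (fun u v H => proj1 (quot_rel_class _ _ Hga Hs) (Hce _ _ H)).
  exact: carrow_ub (qpb_con He) Hga HT' _ _ Hcd.
- move=> H; apply: (bigjoin_ub _ H); split; first exact: quot_rel_con.
  exact: comm_least (quot_rel_con Hga Hs) (TC_quot_rel Hga Hs (carrow_TC Hcm HA Hal Hga)).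
Qed.

End Quotient.

Theorem mainTheorem2 (s : signature) (Sigma : identities s) :
  congruence_modular Sigma ->
  forall A : algebra s, models Sigma A ->
  forall al be th : prel A, is_con al -> is_con be -> is_con th ->
    (releq (carrow (quot_rel th (cjoin al th)) (quot_rel th (cjoin be th)))
           (quot_rel th (carrow (cjoin al th) (cjoin be th)))
     /\ releq (quot_rel th (carrow (cjoin al th) (cjoin be th)))
              (quot_rel th (carrow al (cjoin be th))))
    /\ releq (cperp (quot_rel th (cjoin al th)))
             (quot_rel th (carrow al th)).
Proof.
move=> Hcm A HA al be th Hal Hbe Hth.
have Hj : is_con (cjoin al th) by apply: bigjoin_con.
have Hjb : is_con (cjoin be th) by apply: bigjoin_con.
have Hth_jb : subrel th (cjoin be th) by apply: bigjoin_ub; right.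
have Hth_th : subrel th th by [].
split; [split|].
- exact: (quot_carrow Hth Hcm HA Hj Hjb Hth_jb).
- by rewrite (carrow_join Hcm HA Hal Hth Hjb Hth_jb).
- rewrite /cperp (Delta_quot Hth) -(carrow_join Hcm HA Hal Hth Hth Hth_th).
  exact: (quot_carrow Hth Hcm HA Hj Hth Hth_th).
Qed.
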